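(* For $\xi_1,\xi_2\in\mathbb R$ let $W=\mathrm{diag}\{\xi_1,\dots,\xi_1,0,-\xi_2\}\in\mathbb R^{(d+2)\times(d+2)}$ ($\xi_1$ repeated $d$ times). Then the loss $L(W)$ equals, up to the constant factor $\tfrac12$, $$\mathcal L(\xi_1,\xi_2):=\mathbb E\bigg[\bigg(\frac{\sum_{j=1}^N\exp(\xi_1\langle x_j,x_{N+1}\rangle)y_j}{\sum_{i=1}^N\exp(\xi_1\langle x_i,x_{N+1}\rangle)+\exp(\xi_1-\xi_2)}-y_{i^*}\bigg)^2\bigg],$$ and $\mathcal L$ is not a convex function of $(\xi_1,\xi_2)$.
   Context: Setting: $d,N\ge1$; prompt $x_1,\dots,x_N\in\mathbb R^d$, labels $y_1,\dots,y_N\in\mathbb R$, query $x_{N+1}$. Embedding $h_j=(x_j^\top,y_j,0)^\top$ ($j\le N$), $h_{N+1}=(x_{N+1}^\top,0,1)^\top$. For $W\in\mathbb R^{(d+2)\times(d+2)}$, $\hat y_W(x_{N+1})=\sum_{j=1}^N y_j\exp(h_j^\top Wh_{N+1})/\sum_{j=1}^{N+1}\exp(h_j^\top Wh_{N+1})$. $i^*=\arg\min_{j\in[N]}\|x_{N+1}-x_j\|_2$. Training distribution: $x_1,\dots,x_{N+1}$ i.i.d. uniform on $\mathbb S^{d-1}$; $\mathbb E[y_iy_j\mid x_{1:N}]=0$ ($i\ne j$), $\mathbb E[y_i^2\mid x_{1:N}]=1$, $\mathbb P(y_{1:N}\mid x_{1:N})=\mathbb P(y_{1:N}\mid -x_{1:N})$.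 Loss $L(W)=\frac12\mathbb E[(\hat y_W(x_{N+1})-y_{i^*})^2]$. *)

From HB Require Import structures.
From mathcomp Require Import all_boot all_order all_algebra.
From mathcomp Require Import all_classical all_reals all_analysis.
Set Implicit Arguments. Unset Strict Implicit. Unset Printing Implicit Defensive.
Import Order.TTheory GRing.Theory Num.Theory.
Local Open Scope classical_set_scope.
Local Open Scope ring_scope.

Section Defs.
Variable R : realType.

Definition dotp (d : nat) (x z : d.-tuple R) : R :=
  \sum_(i < d) tnth x i * tnth z i.
Definition tnorm (d : nat) (x : d.-tuple R) : R := Num.sqrt (dotp x x).
Definition tsub (d : nat) (x z : d.-tuple R) : d.-tuple R :=
  [tuple tnth x i - tnth z i | i < d].
Definition topp (d : nat) (x : d.-tuple R) : d.-tuple R := [tuple - tnth x i | i < d].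
Definition tdist (d : nat) (x z : d.-tuple R) : R := tnorm (tsub x z).

Fixpoint iint (n : nat) : (n.-tuple R -> \bar R) -> \bar R :=
  match n return (n.-tuple R -> \bar R) -> \bar R with
  | 0 => fun f => f [tuple]
  | n'.+1 => fun f =>
      (\int[@lebesgue_measure R]_t iint (fun s : n'.-tuple R => f (cons_tuple t s)))%E
  end.

(* cone measure: sigma(A) = vol{ r u : 0 < r <= 1, u in A } / vol(unit ball) *)
Definition tnormalize (d : nat) (x : d.-tuple R) : d.-tuple R :=
  [tuple tnth x i / tnorm x | i < d].
Definition cone (d : nat) (A : set (d.-tuple R)) : set (d.-tuple R) :=
  [set x | 0 < tnorm x <= 1 /\ A (tnormalize x)].
Definition unit_ball (d : nat) : set (d.-tuple R) := [set x | tnorm x <= 1].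
Definition sphere_unif (d : nat) (A : set (d.-tuple R)) : \bar R :=
  (iint (fun x : d.-tuple R => (\1_(cone A) x)%:E) *
   ((fine (iint (fun x : d.-tuple R => (\1_(@unit_ball d) x)%:E)))^-1)%:E)%E.

Definition emb (d : nat) (x : d.-tuple R) (a b : R) : 'cV[R]_(d.+2) :=
  \col_(k < d.+2) (if (k < d)%N then nth 0 (tval x) k
                   else if (k : nat) == d then a else b).
Definition score (d : nat) (W : 'M[R]_(d.+2)) (h h' : 'cV[R]_(d.+2)) : R :=
  ((h^T *m W *m h') 0 0).

Definition yhat (d N : nat) (W : 'M[R]_(d.+2)) (xs : N.-tuple (d.-tuple R))
    (ys : N.-tuple R) (xq : d.-tuple R) : R :=
  let hq := emb xq 0 1 in
  (\sum_(j < N) tnth ys j * expR (score W (emb (tnth xs j) (tnth ys j) 0) hq)) /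
  (\sum_(j < N) expR (score W (emb (tnth xs j) (tnth ys j) 0) hq)
     + expR (score W hq hq)).

(* i^* = argmin_j ||x_{N+1} - x_j||_2 (ties broken by the smallest index),
   as a 0-based index *)
Definition istar (d N : nat) (xs : N.-tuple (d.-tuple R)) (xq : d.-tuple R) : nat :=
  find (fun j : 'I_N =>
          [forall k : 'I_N, tdist xq (tnth xs j) <= tdist xq (tnth xs k)])
       (enum 'I_N).
Definition ystar (d N : nat) (xs : N.-tuple (d.-tuple R)) (ys : N.-tuple R)
    (xq : d.-tuple R) : R := nth 0 (tval ys) (istar xs xq).

Definition Wdiag (d : nat) (xi1 xi2 : R) : 'M[R]_(d.+2) :=
  \matrix_(i < d.+2, j < d.+2)
    (if i == j then (if (i < d)%N then xi1 else if (i : nat) == d then 0 else - xi2)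
     else 0).

(* X i : the random vector x_{i+1}, i : 'I_(N+1); the query is X ord_max.
   Y j : the random label y_{j+1}, j : 'I_N. *)
Section Data.
Context (d N : nat) {dT : measure_display} {T : measurableType dT}.
Variables (X : 'I_N.+1 -> T -> d.-tuple R) (Y : 'I_N -> T -> R).
Definition Xp (w : T) : N.-tuple (d.-tuple R) :=
  [tuple X (widen_ord (leqnSn N) j) w | j < N].
Definition Xq (w : T) : d.-tuple R := X ord_max w.
Definition Yt (w : T) : N.-tuple R := [tuple Y j w | j < N].
Definition XpN (w : T) : N.-tuple (d.-tuple R) := [tuple topp (tnth (Xp w) j) | j < N].
End Data.

Definition loss (d N : nat) {dT : measure_display} {T : measurableType dT}
    (P : probability T R) (X : 'I_N.+1 -> T -> d.-tuple R) (Y : 'I_N -> T -> R)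
    (W : 'M[R]_(d.+2)) : \bar R :=
  ((2^-1)%:E * \int[P]_w
     ((yhat W (Xp X w) (Yt Y w) (Xq X w) - ystar (Xp X w) (Yt Y w) (Xq X w)) ^+ 2)%:E)%E.

Definition calL (d N : nat) {dT : measure_display} {T : measurableType dT}
    (P : probability T R) (X : 'I_N.+1 -> T -> d.-tuple R) (Y : 'I_N -> T -> R)
    (xi1 xi2 : R) : R :=
  fine (\int[P]_w
    (((\sum_(j < N) expR (xi1 * dotp (tnth (Xp X w) j) (Xq X w)) * Y j w) /
      (\sum_(i < N) expR (xi1 * dotp (tnth (Xp X w) i) (Xq X w)) + expR (xi1 - xi2))
      - ystar (Xp X w) (Yt Y w) (Xq X w)) ^+ 2)%:E)%E.

End Defs.

(* With W = diag(xi1, ..., xi1, 0, -xi2), a prompt token scores xi1 <x_j, x_{N+1}>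
   against the query and the query scores xi1 |x_{N+1}|^2 - xi2 against itself,
   which is xi1 - xi2 almost surely because x_{N+1} is uniform on the sphere;
   this gives L = calL / 2.
   On the line xi1 = 0 all prompt scores vanish, so with a = 1 / (N + e^(-xi2))
   and E[y_i y_j] = delta_ij one gets calL(0, xi2) = N a^2 - 2 B a + C.  This is
   bounded in xi2, and a bounded convex function on R is constant; but a is
   strictly increasing and a nonconstant quadratic takes no value three times. *)

From HB Require Import structures.
From mathcomp Require Import all_boot all_order all_algebra.
From mathcomp Require Import all_classical all_reals all_analysis.
From mathcomp Require Import measurable_realfun ring lra.
Import Order.TTheory GRing.Theory Num.Theory.
Set Implicit Arguments. Unset Strict Implicit.
Local Open Scope classical_set_scope.
Local Open Scope ring_scope.

Section tuple_geometry.
Variable R : realType.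

Lemma dotp_ge0 d (x : d.-tuple R) : 0 <= dotp x x.
Proof. by apply: sumr_ge0 => i _; rewrite -expr2 sqr_ge0. Qed.

Lemma dotp_tnormalize d (x : d.-tuple R) : 0 < tnorm x ->
  dotp (tnormalize x) (tnormalize x) = 1.
Proof.
rewrite {1}/tnorm sqrtr_gt0 => x_gt0.
rewrite {1}/dotp; under eq_bigr do rewrite !tnth_mktuple -expr2 expr_div_n.
rewrite -mulr_suml sqr_sqrtr ?dotp_ge0 //.
under eq_bigr do rewrite expr2.
by rewrite divff // gt_eqF.
Qed.

Lemma iint0 n : iint (fun _ : n.-tuple R => 0%:E) = 0%E.
Proof. by elim: n => [//|n IH] /=; rewrite IH integral0. Qed.

Lemma sphere_unif_off_sphere d :
  sphere_unif [set x : d.-tuple R | dotp x x != 1] = 0%E.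
Proof.
rewrite /sphere_unif (_ : cone _ = set0); last first.
  apply/seteqP; split => x // [/andP[x_gt0 _]] /=.
  by rewrite dotp_tnormalize // eqxx.
rewrite (_ : (fun x => _) = fun=> 0%:E); first by rewrite iint0 mul0e.
by apply/funext => x; rewrite indic0.
Qed.

Lemma nth_as_sum N (ys : N.-tuple R) i :
  nth 0 ys i = \sum_(k < N) if i == k then tnth ys k else 0.
Proof.
have [i_lt|i_ge] := ltnP i N; last first.
  rewrite nth_default ?size_tuple // big1 // => k _.
  by rewrite ifF //; apply: contra_leqF i_ge => /eqP ->.
rewrite (bigD1 (Ordinal i_lt)) //= eqxx big1 ?addr0 ?(tnth_nth 0) // => k.
by rewrite -val_eqE /= eq_sym => /negbTE ->.
Qed.

Lemma normr_nth_le_sum N (ys : N.-tuple R) i :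
  `|nth 0 ys i| <= \sum_(k < N) `|tnth ys k|.
Proof.
rewrite nth_as_sum; apply: (le_trans (ler_norm_sum _ _ _)); apply: ler_sum => k _.
by case: ifP; rewrite ?normr0.
Qed.

Lemma score_Wdiag d xi1 xi2 (x z : d.-tuple R) (a b a' b' : R) :
  score (Wdiag d xi1 xi2) (emb x a b) (emb z a' b') = xi1 * dotp x z - xi2 * b * b'.
Proof.
rewrite /score !mxE.
have diag k : \sum_j (emb x a b)^T 0 j * Wdiag d xi1 xi2 j k =
    emb x a b k 0 * Wdiag d xi1 xi2 k k.
  rewrite (bigD1 k) //= big1 ?addr0; first by rewrite mxE.
  by move=> j /negbTE jk; rewrite [Wdiag _ _ _ j k]mxE jk mulr0.
under eq_bigr do rewrite mxE diag.
rewrite !big_ord_recr /= !mxE /= eqxx ltnn ltnNge leqW // (gtn_eqF (ltnSn d)) /=.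
rewrite !eqxx mulr0 mul0r addr0 /dotp mulr_sumr.
congr (_ + _); last by ring.
by apply: eq_bigr => i _; rewrite !mxE /= eqxx ltn_ord -!tnth_nth; ring.
Qed.

End tuple_geometry.

Section softmax_average.
Variable R : realType.

Definition softmax_avg n (c : 'I_n -> R) (e : R) (y : 'I_n -> R) : R :=
  (\sum_(j < n) expR (c j) * y j) / (\sum_(i < n) expR (c i) + expR e).

Lemma softmax_avg_norm_le n (c : 'I_n -> R) e y :
  `|softmax_avg c e y| <= \sum_j `|y j|.
Proof.
have den_gt0 : 0 < \sum_(i < n) expR (c i) + expR e.
  by apply: ltr_wpDl; [apply: sumr_ge0 => i _; exact: expR_ge0|exact: expR_gt0].
rewrite normrM normfV (gtr0_norm den_gt0) ler_pdivrMr //.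
apply: (le_trans (ler_norm_sum _ _ _)); rewrite mulr_suml; apply: ler_sum => j _.
rewrite normrM (gtr0_norm (expR_gt0 _)) mulrC ler_wpM2l //.
apply: (le_trans _ (ltW (ltr_pwDr (expR_gt0 e) (lexx _)))).
by rewrite (bigD1 j) //= lerDl; apply: sumr_ge0 => i _; exact: expR_ge0.
Qed.

Lemma softmax_avg_zero_scores n (c : 'I_n -> R) e y : (forall j, c j = 0) ->
  softmax_avg c e y = (\sum_j y j) / (n%:R + expR e).
Proof.
move=> c0; rewrite /softmax_avg; under eq_bigr do rewrite c0 expR0 mul1r.
by under [X in _ / (X + _)]eq_bigr do rewrite c0 expR0; rewrite sumr_const card_ord.
Qed.

(* The weight of each prompt token when all prompt scores vanish and the query
   scores -s against itself. *)
Definition flat_weight (n : nat) (s : R) : R := (n%:R + expR (- s))^-1.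

Lemma flat_weight_bounds n s : (0 < n)%N -> 0 < flat_weight n s < 1.
Proof.
move=> n_gt0; have n_ge1 : 1 <= n%:R :> R by rewrite ler1n.
have den_gt1 : 1 < n%:R + expR (- s) by have := expR_gt0 (- s); lra.
by rewrite invr_gt0 invf_lt1; [apply/andP; split|]; lra.
Qed.

Lemma flat_weight_increasing n : {homo flat_weight n : s t / s < t}.
Proof.
move=> s t lt_st; have n_ge0 : 0 <= n%:R :> R by [].
have := expR_gt0 (- s); have := expR_gt0 (- t) => et_gt0 es_gt0.
rewrite /flat_weight ltf_pV2 ?posrE; try lra.
by rewrite ltrD2l ltr_expR ltrN2.
Qed.

Lemma yhat_Wdiag d N xi1 xi2 (xs : N.-tuple (d.-tuple R)) ys xq :
  yhat (Wdiag d xi1 xi2) xs ys xq =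
  softmax_avg (fun j => xi1 * dotp (tnth xs j) xq) (xi1 * dotp xq xq - xi2) (tnth ys).
Proof.
rewrite /yhat /softmax_avg score_Wdiag !mulr1.
congr (_ / (_ + _)); apply: eq_bigr => j _;
  by rewrite score_Wdiag mulr0 mul0r subr0 // mulrC.
Qed.

End softmax_average.

Lemma quadratic_eq_vertex (R : idomainType) (c b a a' : R) : a != a' ->
  c * a ^+ 2 - b * a = c * a' ^+ 2 - b * a' -> c * (a + a') = b.
Proof.
move=> neq_aa' eq_q; apply/eqP; rewrite -subr_eq0.
have : (a - a') * (c * (a + a') - b) == 0.
  apply/eqP; transitivity (c * a ^+ 2 - b * a - (c * a' ^+ 2 - b * a')); first by ring.
  by rewrite eq_q subrr.
by rewrite mulf_eq0 [a - a' == 0]subr_eq0 (negbTE neq_aa').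
Qed.

Lemma quadratic_inj_nonconstant (R : realFieldType) (f : R -> R) (c b C : R) :
  c != 0 -> injective f ->
  ~ (forall s t, c * f s ^+ 2 - b * f s + C = c * f t ^+ 2 - b * f t + C).
Proof.
move=> c_neq0 f_inj f_const.
have vertex s : s != 0 -> c * (f s + f 0) = b.
  move=> s_neq0; apply: quadratic_eq_vertex; first by rewrite (inj_eq f_inj).
  exact: addIr (f_const s 0).
have : f 1 = f 2.
  apply: (addIr (f 0)); apply: (mulfI c_neq0).
  by rewrite !vertex ?oner_neq0 ?pnatr_eq0.
by move/f_inj/eqP; rewrite lt_eqF // ltr1n.
Qed.

Lemma normr_quadratic_le (R : realDomainType) (c b C x : R) : 0 <= x <= 1 ->
  `|c * x ^+ 2 - b * x + C| <= `|c| + `|b| + `|C|.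
Proof.
move=> /andP[x_ge0 x_le1]; have x2_le1 : x ^+ 2 <= 1 by rewrite exprn_ile1.
rewrite (le_trans (ler_normD _ _)) // lerD2r (le_trans (ler_normB _ _)) //.
apply: lerD; rewrite normrM ler_piMr //.
- by rewrite ger0_norm ?exprn_ge0.
- by rewrite ger0_norm.
Qed.

Definition convex_realfun (R : numFieldType) (f : R -> R) :=
  forall s u t, 0 <= t <= 1 -> f (t * s + (1 - t) * u) <= t * f s + (1 - t) * f u.

Lemma convex_function_line (R : numFieldType) (E : lmodType R)
    (F : convex_lmodType E -> R^o) (a b : E) :
  convex_function setT F -> convex_realfun (fun s => F (a + s *: b)).
Proof.
move=> F_convex s u t /andP[t_ge0 t_le1].
pose x : convex_lmodType E := a + s *: b.
pose y : convex_lmodType E := a + u *: b.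
have := F_convex (Itv01 t_ge0 t_le1) x y (in_setT _) (in_setT _).
rewrite convRE /=.
have -> : conv (Itv01 t_ge0 t_le1) x y =
    t *: (a + s *: b) + (1 - t) *: (a + u *: b) :> E by [].
rewrite !scalerDr !scalerA addrACA -!scalerDl (_ : t + (1 - t) = 1) ?scale1r //.
by rewrite addrC subrK.
Qed.

Section bounded_convex.
Variable R : realFieldType.

Lemma bounded_convex_nonincreasing (f : R -> R) M : convex_realfun f ->
  (forall x, `|f x| <= M) -> {homo f : s t / s < t >-> t <= s}.
Proof.
move=> f_convex f_bounded s t lt_st; rewrite leNgt; apply/negP => lt_fst.
have M_ge0 : 0 <= M := le_trans (normr_ge0 _) (f_bounded 0).
pose D := f t - f s.
have D_gt0 : 0 < D by rewrite subr_gt0.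
pose r := D / (D + 2 * M + 1).
have rE : r * (D + 2 * M + 1) = D by rewrite mulfVK // gt_eqF //; lra.
have r_gt0 : 0 < r by rewrite divr_gt0 //; lra.
have r_lt1 : r < 1 by rewrite ltr_pdivrMr ?mul1r; lra.
(* Convexity on the chord from s through t to u forces f u >= f s + D / r > M. *)
pose u := s + (t - s) / r.
have := f_convex s u (1 - r); rewrite (_ : (1 - r) * s + (1 - (1 - r)) * u = t); last first.
  by rewrite /u; field; rewrite gt_eqF.
have /ler_normlP [fu_ge fu_le] := f_bounded u.
have /ler_normlP [fs_ge fs_le] := f_bounded s.
move=> /(_ ltac:(apply/andP; split; lra)) chord.
rewrite /D in D_gt0 rE.
nra.
Qed.

Lemma bounded_convex_constant (f : R -> R) M : convex_realfun f ->
  (forall x, `|f x| <= M) -> forall s t, f s = f t.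
Proof.
move=> f_convex f_bounded.
have f_noninc := bounded_convex_nonincreasing f_convex f_bounded.
have fN_noninc : {homo (fun x => f (- x)) : s t / s < t >-> t <= s}.
  apply: bounded_convex_nonincreasing (fun x => f_bounded (- x)) => a b c c01.
  rewrite (_ : - (c * a + (1 - c) * b) = c * - a + (1 - c) * - b); first exact: f_convex.
  by ring.
have f_nondec s t : s < t -> f s <= f t.
  by move=> lt_st; rewrite -(opprK s) -(opprK t); apply: fN_noninc; rewrite ltrN2.
move=> s t; case: (ltgtP s t) => [lt_st|lt_ts|-> //]; apply/eqP; rewrite eq_le.
- by rewrite f_nondec // f_noninc.
- by rewrite f_noninc // f_nondec.
Qed.

End bounded_convex.

Section measurability.
Variable R : realType.
Context {dT : measure_display} {T : measurableType dT}.

Lemma measurable_inv : measurable_fun [set: R] GRing.inv.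
Proof.
rewrite (_ : GRing.inv = fun x : R => if x == 0 then 0 else x^-1); last first.
  by apply/funext => x; case: eqP => // ->; rewrite invr0.
apply: measurable_fun_if => //; first exact: measurable_fun_eqr.
apply: open_continuous_measurable_fun.
  rewrite (_ : _ `&` _ = [set x | x != 0]); first exact: open_neq.
  by apply/seteqP; split => x /=; [case => _ /negbT|move=> /negbTE ->].
by move=> x; rewrite inE /= => -[_ /negbT x_neq0]; exact: inv_continuous.
Qed.

Lemma measurable_dotp n (f g : T -> n.-tuple R) :
  measurable_fun setT f -> measurable_fun setT g ->
  measurable_fun setT (fun w => dotp (f w) (g w)).
Proof.
move=> mf mg; apply: measurable_sum => i.
by apply: measurable_funM; exact: measurableT_comp (measurable_tnth i) _.
Qed.

Lemma measurable_tdist n (f g : T -> n.-tuple R) :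
  measurable_fun setT f -> measurable_fun setT g ->
  measurable_fun setT (fun w => tdist (f w) (g w)).
Proof.
move=> mf mg.
have msub : measurable_fun setT (fun w => tsub (f w) (g w)).
  apply/measurable_fun_tnthP => i.
  rewrite (_ : _ \o _ = fun w => tnth (f w) i - tnth (g w) i); last first.
    by apply/funext => w /=; rewrite tnth_mktuple.
  by apply: measurable_funB; exact: measurableT_comp (measurable_tnth i) _.
rewrite /tdist /tnorm; apply: measurableT_comp; last exact: measurable_dotp.
exact: continuous_measurable_fun (@sqrt_continuous R).
Qed.

Lemma measurable_has (A : Type) (s : seq A) (b : A -> T -> bool) :
  (forall a, measurable_fun setT (b a)) -> measurable_fun setT (fun w => has (b^~ w) s).
Proof.
move=> mb; elim: s => [|a s IH] /=; first exact: measurable_cst.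
exact: measurable_or.
Qed.

Lemma measurable_all (A : Type) (s : seq A) (b : A -> T -> bool) :
  (forall a, measurable_fun setT (b a)) -> measurable_fun setT (fun w => all (b^~ w) s).
Proof.
move=> mb; elim: s => [|a s IH] /=; first exact: measurable_cst.
exact: measurable_and.
Qed.

Lemma measurable_ffun_bool (I : finType) (b : I -> T -> bool)
    (F : {ffun I -> bool} -> bool) :
  (forall i, measurable_fun setT (b i)) ->
  measurable_fun setT (fun w => F [ffun i => b i w]).
Proof.
move=> mb.
rewrite (_ : (fun w => _) = fun w => has (fun f => F f && all (fun i => b i w == f i) (enum I))
    (enum {ffun I -> bool})); last first.
  apply/funext => w; apply/idP/hasP => [Fw|[f _ /andP[Ff /allP bf]]].
    exists [ffun i => b i w]; first by rewrite mem_enum.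
    by rewrite Fw; apply/allP => i _; rewrite ffunE.
  suff -> : [ffun i => b i w] = f by [].
  by apply/ffunP => i; rewrite ffunE; apply/eqP/bf; rewrite mem_enum.
apply: measurable_has => f; apply: measurable_and => //.
apply: measurable_all => i; case: (f i).
- by under eq_fun do rewrite eqb_id; exact: mb.
- by under eq_fun do rewrite eqbF_neg; exact: measurable_neg.
Qed.

Lemma measurable_softmax_avg n (c : 'I_n -> T -> R) (e : T -> R) (y : 'I_n -> T -> R) :
  (forall j, measurable_fun setT (c j)) -> measurable_fun setT e ->
  (forall j, measurable_fun setT (y j)) ->
  measurable_fun setT (fun w => softmax_avg (c^~ w) (e w) (y^~ w)).
Proof.
move=> mc me my; have mexp f := measurableT_comp (@measurable_expR R) f.
apply: measurable_funM.
  by apply: measurable_sum => j; apply: measurable_funM => //; exact: mexp.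
apply: measurableT_comp measurable_inv _; apply: measurable_funD; last exact: mexp.
by apply: measurable_sum => j; exact: mexp.
Qed.

End measurability.

Section attention_data.
Context (R : realType) (d N : nat) (dT : measure_display) (T : measurableType dT)
  (P : probability T R) (X : 'I_N.+1 -> T -> d.-tuple R) (Y : 'I_N -> T -> R).
Hypothesis X_measurable : forall i, measurable_fun setT (X i).
Hypothesis Y_measurable : forall j, measurable_fun setT (Y j).
Hypothesis YY_integrable : forall i j, P.-integrable setT (fun w => (Y i w * Y j w)%:E).

Lemma ae_unit_of_sphere_unif_law (Z : T -> d.-tuple R) : measurable_fun setT Z ->
  (forall A, measurable A -> P (Z @^-1` A) = sphere_unif A) ->
  {ae P, forall w, dotp (Z w) (Z w) = 1}.
Proof.
move=> mZ Z_law.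
have m_off : measurable [set x : d.-tuple R | dotp x x != 1].
  have m_ne1 : measurable_fun setT (fun x : d.-tuple R => dotp x x != 1).
    by apply: measurable_neg; apply: measurable_fun_eqr => //; exact: measurable_dotp.
  by have := m_ne1 measurableT [set true] I; rewrite setTI.
exists (Z @^-1` [set x | dotp x x != 1]); split.
- by rewrite -[X in measurable X]setTI; exact: mZ.
- by rewrite Z_law // sphere_unif_off_sphere.
- by move=> w /= w_off; apply/eqP.
Qed.

Lemma measurable_Xp_tnth j : measurable_fun setT (fun w => tnth (Xp X w) j).
Proof. by under eq_fun do rewrite tnth_mktuple; exact: X_measurable. Qed.

Lemma measurable_istar_eq (k : nat) :
  measurable_fun setT (fun w => istar (Xp X w) (Xq X w) == k).
Proof.
pose b (jk : 'I_N * 'I_N) w :=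
  tdist (Xq X w) (tnth (Xp X w) jk.1) <= tdist (Xq X w) (tnth (Xp X w) jk.2).
pose F (g : {ffun 'I_N * 'I_N -> bool}) :=
  find (fun j : 'I_N => [forall k' : 'I_N, g (j, k')]) (enum 'I_N) == k.
rewrite (_ : (fun w => _) = fun w => F [ffun jk => b jk w]).
  apply: measurable_ffun_bool => jk; apply: measurable_fun_ler;
  by apply: measurable_tdist; [exact: X_measurable|exact: measurable_Xp_tnth].
apply/funext => w; rewrite /F; congr (find _ _ == _).
by apply/funext => j; apply: eq_forallb => k'; rewrite ffunE.
Qed.

Lemma measurable_ystar : measurable_fun setT (fun w => ystar (Xp X w) (Yt Y w) (Xq X w)).
Proof.
rewrite (_ : (fun w => _) = fun w =>
    \sum_(k < N) if istar (Xp X w) (Xq X w) == k then Y k w else 0).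
  by apply: measurable_sum => k; apply: measurable_fun_ifT => //; exact: measurable_istar_eq.
by apply/funext => w; rewrite /ystar nth_as_sum; under eq_bigr do rewrite tnth_mktuple.
Qed.

Lemma normr_ystar_le w : `|ystar (Xp X w) (Yt Y w) (Xq X w)| <= \sum_j `|Y j w|.
Proof.
have -> : \sum_j `|Y j w| = \sum_k `|tnth (Yt Y w) k|.
  by apply: eq_bigr => k _; rewrite tnth_mktuple.
exact: normr_nth_le_sum.
Qed.

Lemma integrable_sqr_sum_abs : P.-integrable setT (fun w => ((\sum_j `|Y j w|) ^+ 2)%:E).
Proof.
apply: (eq_integrable measurableT (fun w => \sum_i \sum_j (`|Y i w * Y j w|)%:E)).
  move=> w _; rewrite expr2 mulr_suml -sumEFin; apply: eq_bigr => i _.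
  by rewrite mulr_sumr -sumEFin; apply: eq_bigr => j _; rewrite normrM.
apply: (@integrable_sum _ _ _ _ _ measurableT) => i _.
apply: (@integrable_sum _ _ _ _ _ measurableT) => j _.
exact: integrable_abse (YY_integrable i j).
Qed.

Lemma integrable_dominated (f : T -> R) (c : R) : measurable_fun setT f ->
  (forall w, `|f w| <= c * (\sum_j `|Y j w|) ^+ 2) ->
  P.-integrable setT (fun w => (f w)%:E).
Proof.
move=> mf f_le; apply: (@le_integrable _ _ _ _ _ measurableT _
  (fun w => (c%:E * ((\sum_j `|Y j w|) ^+ 2)%:E)%E)).
- exact/measurable_EFinP.
- by move=> w _; rewrite -EFinM /= lee_fin (le_trans (f_le w)) // ler_norm.
- exact: integrableZl integrable_sqr_sum_abs.
Qed.

Definition sqerr (c : 'I_N -> T -> R) (e : T -> R) (w : T) : R :=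
  (softmax_avg (c^~ w) (e w) (Y^~ w) - ystar (Xp X w) (Yt Y w) (Xq X w)) ^+ 2.

Lemma calLE xi1 xi2 : calL P X Y xi1 xi2 =
  fine (\int[P]_w (sqerr (fun j w => xi1 * dotp (tnth (Xp X w) j) (Xq X w))
                         (fun=> xi1 - xi2) w)%:E).
Proof. by []. Qed.

Section softmax_scores.
Variables (c : 'I_N -> T -> R) (e : T -> R).
Hypothesis c_measurable : forall j, measurable_fun setT (c j).
Hypothesis e_measurable : measurable_fun setT e.

Lemma measurable_sqerr : measurable_fun setT (sqerr c e).
Proof.
apply: measurable_funX; apply: measurable_funB; last exact: measurable_ystar.
exact: measurable_softmax_avg.
Qed.

Lemma integrable_sqerr : P.-integrable setT (fun w => (sqerr c e w)%:E).
Proof.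
apply: (@integrable_dominated _ 4); first exact: measurable_sqerr.
move=> w; rewrite ger0_norm ?sqr_ge0 // /sqerr.
have := softmax_avg_norm_le (c^~ w) (e w) (Y^~ w); have := normr_ystar_le w.
set u := softmax_avg _ _ _; set z := ystar _ _ _; set s := \sum_j _.
move=> /ler_normlP[z_ge z_le] /ler_normlP[u_ge u_le]; nra.
Qed.

End softmax_scores.

Section loss_formula.
Hypothesis query_on_sphere : {ae P, forall w, dotp (Xq X w) (Xq X w) = 1}.

Lemma loss_Wdiag xi1 xi2 :
  loss P X Y (Wdiag d xi1 xi2) = (2^-1 * calL P X Y xi1 xi2)%:E.
Proof.
pose c j w := xi1 * dotp (tnth (Xp X w) j) (Xq X w).
have mc j : measurable_fun setT (c j).
  apply: measurable_funM => //.
  by apply: measurable_dotp; [exact: measurable_Xp_tnth|exact: X_measurable].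
have me : measurable_fun setT (fun w => xi1 * dotp (Xq X w) (Xq X w) - xi2).
  apply: measurable_funB => //; apply: measurable_funM => //.
  by apply: measurable_dotp; exact: X_measurable.
have me' : measurable_fun setT (fun _ : T => xi1 - xi2) by [].
have fin := integrable_fin_num measurableT (integrable_sqerr mc me').
rewrite calLE EFinM fineK // /loss; congr (_ * _)%E.
transitivity (\int[P]_w (sqerr c (fun w => xi1 * dotp (Xq X w) (Xq X w) - xi2) w)%:E)%E.
  apply: eq_integral => w _.
  have YtE : tnth (Yt Y w) = Y^~ w by apply/funext => j; rewrite tnth_mktuple.
  by rewrite /sqerr yhat_Wdiag YtE.
apply: ae_eq_integral => //.
- exact/measurable_EFinP/(measurable_sqerr mc me).
- exact/measurable_EFinP/(measurable_sqerr mc me').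
apply: filterS query_on_sphere => w xq_unit _.
by rewrite /sqerr xq_unit mulr1.
Qed.

End loss_formula.

Section restriction_to_xi1_0.
Hypothesis Y_orthonormal : forall i j,
  (\int[P]_w (Y i w * Y j w)%:E = (if i == j then 1 else 0)%:E)%E.

Lemma integral_sqr_sum_Y : (\int[P]_w ((\sum_j Y j w) ^+ 2)%:E = N%:R%:E)%E.
Proof.
transitivity (\int[P]_w (\sum_(i < N) \sum_(j < N) (Y i w * Y j w)%:E))%E.
  apply: eq_integral => w _; rewrite expr2 mulr_suml -sumEFin.
  by apply: eq_bigr => i _; rewrite mulr_sumr -sumEFin.
rewrite integral_sum //; last first.
  by move=> i; apply: (@integrable_sum _ _ _ _ _ measurableT) => j _.
transitivity (\sum_(i < N) (1 : R)%:E)%E; last by rewrite sumEFin sumr_const card_ord.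
apply: eq_bigr => i _; rewrite integral_sum //.
under eq_bigr do rewrite Y_orthonormal.
rewrite sumEFin (bigD1 i) //= eqxx big1 ?addr0 // => j.
by rewrite eq_sym => /negbTE ->.
Qed.

Lemma calL_xi1_0 : exists B C : R, forall s,
  calL P X Y 0 s = N%:R * flat_weight N s ^+ 2 - 2 * B * flat_weight N s + C.
Proof.
pose S w := \sum_j Y j w.
pose Z w := ystar (Xp X w) (Yt Y w) (Xq X w).
have S_le w : `|S w| <= \sum_j `|Y j w| by exact: ler_norm_sum.
have mS : measurable_fun setT S by exact: measurable_sum.
have SS_int : P.-integrable setT (fun w => (S w ^+ 2)%:E).
  apply: (@integrable_dominated _ 1); first exact: measurable_funX.
  by move=> w; rewrite mul1r normrX lerXn2r ?nnegrE ?sumr_ge0.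
have SZ_int : P.-integrable setT (fun w => (S w * Z w)%:E).
  apply: (@integrable_dominated _ 1); first exact: measurable_funM mS measurable_ystar.
  by move=> w; rewrite mul1r normrM expr2 ler_pM ?normr_ystar_le.
have ZZ_int : P.-integrable setT (fun w => (Z w ^+ 2)%:E).
  apply: (@integrable_dominated _ 1); first exact: measurable_funX measurable_ystar.
  by move=> w; rewrite mul1r normrX lerXn2r ?nnegrE ?sumr_ge0 ?normr_ystar_le.
exists (fine (\int[P]_w (S w * Z w)%:E)), (fine (\int[P]_w (Z w ^+ 2)%:E)) => s.
set a := flat_weight N s.
have a_int := integrableZl measurableT (- (2 * a)) SZ_int.
rewrite calLE (_ : (fun w => _) = fun w =>
    (a ^+ 2)%:E * (S w ^+ 2)%:E + ((- (2 * a))%:E * (S w * Z w)%:E + (Z w ^+ 2)%:E))%E.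
  rewrite (integralD measurableT (integrableZl measurableT _ SS_int)); last first.
    exact: integrableD.
  rewrite (integralD measurableT a_int ZZ_int).
  rewrite !(integralZl measurableT) // integral_sqr_sum_Y.
  rewrite -(fineK (integrable_fin_num measurableT SZ_int)).
  rewrite -(fineK (integrable_fin_num measurableT ZZ_int)).
  by rewrite -!EFinM -!EFinD /=; ring.
apply/funext => w; rewrite -!EFinM -!EFinD /sqerr softmax_avg_zero_scores => [|j].
  by rewrite /a /flat_weight /S /Z sub0r; congr EFin; ring.
by rewrite mul0r.
Qed.

Lemma calL_not_convex : (0 < N)%N ->
  ~ convex_function setT (fun v : 'rV[R]_2 => calL P X Y (v 0 0) (v 0 1)).
Proof.
move=> N_gt0 /convex_function_line line_convex.
have [B [C calL0E]] := calL_xi1_0.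
have f_convex : convex_realfun (calL P X Y 0).
  move=> s u t t01; have := line_convex 0 (delta_mx 0 1) s u t t01.
  by rewrite !add0r !mxE /= !mulr0 !mulr1.
have f_bounded s : `|calL P X Y 0 s| <= `|N%:R| + `|2 * B| + `|C|.
  have /andP[/ltW w_ge0 /ltW w_le1] := flat_weight_bounds s N_gt0.
  by rewrite calL0E normr_quadratic_le ?w_ge0.
have f_const := bounded_convex_constant f_convex f_bounded.
apply: (quadratic_inj_nonconstant (f := flat_weight N) (c := N%:R) (b := 2 * B) (C := C)).
- by rewrite pnatr_eq0 -lt0n.
- exact: inc_inj (le_mono (flat_weight_increasing N)).
- by move=> s t; rewrite -!calL0E; exact: f_const.
Qed.

End restriction_to_xi1_0.

End attention_data.

Unset Implicit Arguments.
Theorem lemma3 (R : realType) (d N : nat) (hd : (0 < d)%N) (hN : (0 < N)%N)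
  (dT : measure_display) (T : measurableType dT) (P : probability T R)
  (X : 'I_N.+1 -> T -> d.-tuple R) (Y : 'I_N -> T -> R)
  (hXm : forall i, measurable_fun setT (X i))
  (hYm : forall j, measurable_fun setT (Y j))
  (* x_1, ..., x_{N+1} i.i.d. uniform on S^{d-1} *)
  (hiid : forall A : 'I_N.+1 -> set (d.-tuple R), (forall i, measurable (A i)) ->
     P (\bigcap_(i in [set: 'I_N.+1]) (X i @^-1` A i)) =
     (\prod_(i < N.+1) sphere_unif (A i))%E)
  (* the query x_{N+1} is independent of the prompt (x_{1:N}, y_{1:N}) *)
  (hq : forall (B : set (N.-tuple (d.-tuple R) * N.-tuple R)) (A : set (d.-tuple R)),
     measurable B -> measurable A ->
     P ([set w | B (Xp X w, Yt Y w)] `&` (Xq X @^-1` A)) =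
     (P [set w | B (Xp X w, Yt Y w)] * sphere_unif A)%E)
  (* E[y_i y_j | x_{1:N}] = delta_ij *)
  (hint : forall i j, P.-integrable setT (fun w => (Y i w * Y j w)%:E))
  (hcond : forall i j (B : set (N.-tuple (d.-tuple R))), measurable B ->
     (\int[P]_(w in Xp X @^-1` B) (Y i w * Y j w)%:E =
      (if i == j then 1 else 0)%:E * P (Xp X @^-1` B))%E)
  (* P(y_{1:N} | x_{1:N}) = P(y_{1:N} | -x_{1:N}) *)
  (hsym : forall (B : set (N.-tuple (d.-tuple R))) (C : set (N.-tuple R)),
     measurable B -> measurable C ->
     P (Xp X @^-1` B `&` Yt Y @^-1` C) = P (XpN X @^-1` B `&` Yt Y @^-1` C)) :
  (forall xi1 xi2 : R,
     loss P X Y (Wdiag d xi1 xi2) = (2^-1 * calL P X Y xi1 xi2)%:E) /\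
  ~ convex_function setT (fun v : 'rV[R]_2 => calL P X Y (v 0 0) (v 0 1)).
Proof.
have query_law A : measurable A -> P (Xq X @^-1` A) = sphere_unif A.
  move=> mA; have := hq setT A measurableT mA.
  by rewrite (_ : [set w | setT (Xp X w, Yt Y w)] = setT) // setTI probability_setT mul1e.
have Y_orthonormal i j :
    (\int[P]_w (Y i w * Y j w)%:E = (if i == j then 1 else 0)%:E)%E.
  by have := hcond i j setT measurableT; rewrite preimage_setT probability_setT mule1.
split => [xi1 xi2|]; last exact: calL_not_convex.
apply: loss_Wdiag => //.
exact: ae_unit_of_sphere_unif_law (hXm ord_max) query_law.
Qed.
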